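(* Let $k \geq \ell \geq 2$ and $n \geq k+\ell$. Let $\mathcal F \subset \binom{[n]}{k}$ and $\mathcal G \subset \binom{[n]}{\ell}$ be non-trivial, shifted and cross-intersecting. Then $$|\mathcal F| + |\mathcal G| \leq \sum_{2 \leq i \leq \ell+1} \binom{\ell+1}{i}\binom{n-\ell-1}{k-i} + \binom{\ell+1}{\ell} =: g(n,k,\ell).$$
   Context: Families are cross-intersecting if every member of one meets every member of the other; a non-empty family is non-trivial if the intersection of all its members is empty. For $r$-sets $A=\{x_1<\dots<x_r\}$, $B=\{y_1<\dots<y_r\}$, $A\prec B$ means $x_i\le y_i$ for all $i$; a family of $r$-sets is shifted (initial) if $A\prec B\in\mathcal F$ implies $A\in\mathcal F$. Binomial coefficients $\binom{a}{b}$ with $b<0$ are $0$. *)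

From mathcomp Require Import all_boot.
Set Implicit Arguments. Unset Strict Implicit. Unset Printing Implicit Defensive.

(* Ground set [n] = {1..n} is modelled as 'I_n = {0..n-1}; the natural order
   is preserved, so shiftedness is unaffected. *)

Definition sorted_elems (n : nat) (A : {set 'I_n}) : seq nat :=
  sort leq [seq val x | x <- enum A].

Definition shift_le (n : nat) (A B : {set 'I_n}) : bool :=
  (#|A| == #|B|) &&
  [forall i : 'I_#|A|, nth 0 (sorted_elems A) i <= nth 0 (sorted_elems B) i].

Definition uniform (n r : nat) (F : {set {set 'I_n}}) : Prop :=
  forall A, A \in F -> #|A| = r.

Definition shifted (n r : nat) (F : {set {set 'I_n}}) : Prop :=
  forall A B : {set 'I_n}, #|A| = r -> #|B| = r ->
    shift_le A B -> B \in F -> A \in F.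

Definition cross_intersecting (n : nat) (F G : {set {set 'I_n}}) : Prop :=
  forall A B, A \in F -> B \in G -> A :&: B != set0.

Definition non_trivial (n : nat) (F : {set {set 'I_n}}) : Prop :=
  F != set0 /\ \bigcap_(A in F) A = set0.

(* binomial coefficient with integer lower index b = k - i: 0 when k < i *)
Definition binom_diff (a k i : nat) : nat := if i <= k then 'C(a, k - i) else 0.

Definition g (n k l : nat) : nat :=
  \sum_(2 <= i < l.+2) 'C(l.+1, i) * binom_diff (n - l - 1) k i + 'C(l.+1, l).

From mathcomp Require Import all_boot zify.
Set Implicit Arguments. Unset Strict Implicit. Unset Printing Implicit Defensive.

(* Non-triviality and shiftedness force F to contain every k-set [k+1] \ {x} and G
   every l-set [l+1] \ {x}; by cross-intersection every A in F meets T = [l+1] in at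
   least two points and every B in G meets [k+1] in at least two points.  At most
   C(l+1, l) members of G lie inside T.  Every other B in G is sent to the k-set
   B Δ [t], with t maximal such that |B Δ [t]| = k.  This map is injective, its
   images still meet T twice, and they avoid F: maximality of t is a ballot
   condition saying that the complement of B Δ [t] has at least as many points as B
   in every initial segment, so it contains an l-set preceding B, which lies in G by
   shiftedness and is disjoint from B Δ [t].  Hence |F| + |G| is at most C(l+1, l)
   plus the number of k-sets meeting T at least twice, which is the sum in g. *)

Section CardIdentities.
Variable T : finType.

Lemma card_sum_mem (X : {set T}) : #|X| = \sum_(x : T) (x \in X).
Proof. by rewrite -sum1_card big_mkcond /=; apply: eq_bigr => x _; case: (x \in X). Qed.

Lemma eq_cards_add (A B C D : {set T}) :
  (forall x, (x \in A) + (x \in B) = (x \in C) + (x \in D)) ->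
  #|A| + #|B| = #|C| + #|D|.
Proof. by move=> eqABCD; rewrite !card_sum_mem -!big_split; apply: eq_bigr. Qed.

Lemma leq_cards_add (A B C D : {set T}) :
  (forall x, (x \in A) + (x \in B) <= (x \in C) + (x \in D)) ->
  #|A| + #|B| <= #|C| + #|D|.
Proof. by move=> leABCD; rewrite !card_sum_mem -!big_split; apply: leq_sum. Qed.

End CardIdentities.

Lemma nat_ivt (f : nat -> nat) a b k : (forall i, f i.+1 <= (f i).+1) -> a <= b ->
  f a <= k -> k <= f b -> exists2 i, a <= i <= b & f i = k.
Proof.
move=> f_step + fa_le; elim: b => [|b IHb] le_ab le_fb.
  by exists 0; move: le_ab fa_le le_fb; rewrite leqn0 => /eqP-> *; lia.
have [<-|ne_fb] := eqVneq (f b.+1) k; first by exists b.+1; rewrite ?leqnn ?le_ab.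
have lt_fb : k < f b.+1 by rewrite ltn_neqAle eq_sym ne_fb.
have [le_ab'|lt_ba] := leqP a b; last first.
  have eq_a : a = b.+1 by lia.
  by move: fa_le; rewrite eq_a leqNgt lt_fb.
have [i /andP[le_ai le_ib] <-] := IHb le_ab' (leq_trans lt_fb (f_step b)).
by exists i; rewrite ?le_ai ?leqW.
Qed.

Section InitialSegments.
Variable n : nat.
Implicit Types (A B U W X : {set 'I_n}) (s t : nat).

Definition iseg t : {set 'I_n} := [set x : 'I_n | x < t].

Lemma iseg_ge t : n <= t -> iseg t = [set: 'I_n].
Proof. by move=> le_nt; apply/setP => x; rewrite !inE (leq_trans (ltn_ord x)). Qed.

Lemma card_iseg t : t <= n -> #|iseg t| = t.
Proof.
move=> le_tn; have widen_inj : injective (widen_ord le_tn) by move=> i j [] /val_inj.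
rewrite -[RHS](card_ord t) -(card_imset _ widen_inj).
apply: eq_card => x; rewrite inE; apply/idP/imsetP => [lt_xt|[y _ ->]].
  by exists (Ordinal lt_xt) => //; apply: val_inj.
exact: (ltn_ord y).
Qed.

Lemma card_setI_isegS X s (lt_sn : s < n) :
  #|X :&: iseg s.+1| = #|X :&: iseg s| + (Ordinal lt_sn \in X).
Proof.
rewrite !card_sum_mem (bigD1 (Ordinal lt_sn)) //= [in RHS](bigD1 (Ordinal lt_sn)) //=.
rewrite !inE ltnn ltnSn !andbT andbF add0n addnC; congr (_ + _).
apply: eq_bigr => x ne_xs; rewrite !inE ltnS leq_eqVlt.
by rewrite (_ : val x == s = false) //; apply: contraNF ne_xs => /eqP eq_xs; apply/eqP/val_inj.
Qed.

Definition dominates A B := forall s, #|B :&: iseg s| <= #|A :&: iseg s|.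

Lemma count_sorted_elems A s :
  count (fun v => v < s) (sorted_elems A) = #|A :&: iseg s|.
Proof.
rewrite /sorted_elems (permP (permEl (perm_sort leq _))) count_map.
rewrite -size_filter cardE /enum_mem -filter_predI; congr size.
by apply: eq_filter => x; rewrite !inE andbC.
Qed.

Lemma size_sorted_elems A : size (sorted_elems A) = #|A|.
Proof. by rewrite /sorted_elems size_sort size_map cardE. Qed.

Lemma sorted_sorted_elems A : sorted leq (sorted_elems A).
Proof. exact/sort_sorted/leq_total. Qed.

Lemma shift_le_dominates A B : #|A| = #|B| -> dominates A B -> shift_le A B.
Proof.
move=> eq_AB domAB; rewrite /shift_le eq_AB eqxx; apply/forallP => i.
set a := sorted_elems A; set b := sorted_elems B.
have ltia : (i : nat) < size a by rewrite size_sorted_elems eq_AB.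
have ltib : (i : nat) < size b by rewrite size_sorted_elems.
rewrite leqNgt; apply/negP => lt_ba.
have := domAB (nth 0 b i).+1; rewrite -!count_sorted_elems -/a -/b.
set c := (nth 0 b i).+1; apply/negP; rewrite -ltnNge; apply: (@leq_ltn_trans i).
  rewrite -(cat_take_drop i a) count_cat.
  have -> : count (fun v => v < c) (drop i a) = 0.
    apply/eqP; rewrite -leqn0 leqNgt -has_count; apply/(has_nthP 0) => -[j].
    rewrite size_drop nth_drop ltnS => ltj le_ab.
    have : nth 0 a i <= nth 0 a (i + j).
      by apply: (sorted_leq_nth leq_trans leqnn 0 (sorted_sorted_elems A));
        rewrite ?inE ?leq_addr // -ltn_subRL.
    by rewrite leqNgt (leq_ltn_trans le_ab lt_ba).
  by rewrite addn0 (leq_trans (count_size _ _)) // size_take; case: ltnP.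
rewrite -(cat_take_drop i.+1 b) count_cat; apply: leq_trans (leq_addr _ _).
have /eqP -> : count (fun v => v < c) (take i.+1 b) == i.+1.
  rewrite -{2}(size_takel ltib) -all_count; apply/(all_nthP 0) => j.
  rewrite size_takel // => ltj.
  rewrite nth_take // /c ltnS.
  apply: (sorted_leq_nth leq_trans leqnn 0 (sorted_sorted_elems B)) => //.
  by rewrite inE (leq_ltn_trans _ ltib) // -ltnS.
exact: ltnSn.
Qed.

Lemma dominates_setI_iseg U B m :
  B \subset U -> #|B| <= #|U :&: iseg m| -> dominates (U :&: iseg m) B.
Proof.
move=> sBU le_B s; have [le_sm|lt_ms] := leqP s m.
  apply/subset_leq_card/subsetP => x; rewrite !inE => /andP[xB lt_xs].
  by rewrite (subsetP sBU _ xB) lt_xs (leq_trans lt_xs le_sm).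
have -> : U :&: iseg m :&: iseg s = U :&: iseg m.
  by apply/setP => x; rewrite !inE -andbA; case: ltnP => //= /ltn_trans->.
exact/(leq_trans _ le_B)/subset_leq_card/subsetIl.
Qed.

Lemma dominates_setD1 W (x y : 'I_n) : x <= y -> x \in W -> dominates (W :\ y) (W :\ x).
Proof.
move=> le_xy xW s; rewrite !setIDAC; set A := W :&: iseg s.
have [yA|yNA] := boolP (y \in A).
  have xA : x \in A by move: yA; rewrite !inE xW => /andP[_]; apply: leq_ltn_trans.
  by apply/eq_leq/eqP; rewrite -(eqn_add2l true) -{1}xA -{1}yA -!cardsD1.
apply/subset_leq_card/subsetP => z /setD1P[_ zA]; rewrite in_setD1 zA andbT.
by apply: contraNneq yNA => <-.
Qed.

End InitialSegments.

Lemma two_le_card_setI_iseg n r (Y : {set 'I_n}) : r < n ->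
  (forall x : 'I_n, x < r.+1 -> Y :&: (iseg n r.+1 :\ x) != set0) ->
  2 <= #|Y :&: iseg n r.+1|.
Proof.
move=> lt_rn meetY; rewrite leqNgt ltnS; apply/negP => le1.
have [Y0|[x xY]] := set_0Vmem (Y :&: iseg n r.+1).
  have /negP := meetY (Ordinal (leq_ltn_trans (leq0n r) lt_rn)) isT.
  by rewrite setIDA Y0 set0D eqxx.
have lt_xr : x < r.+1 by move: xY; rewrite !inE => /andP[].
have /negP := meetY x lt_xr.
rewrite setIDA -cards_eq0; apply.
by move: le1; rewrite (cardsD1 x) xY add1n ltnS leqn0.
Qed.

Section NontrivialShifted.
Variables (n r : nat) (H : {set {set 'I_n}}).
Hypotheses (lt_rn : r < n) (uH : uniform r H) (ntH : non_trivial H) (sH : shifted r H).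

Lemma shifted_iseg_setD1 (x : 'I_n) : x < r.+1 -> iseg n r.+1 :\ x \in H.
Proof.
move=> lt_xr; have [H0 capH] := ntH.
pose z := Ordinal (leq_ltn_trans (leq0n r) lt_rn).
have [B BH zNB] : exists2 B, B \in H & z \notin B.
  apply/exists_inP; rewrite -negb_forall_in; apply/negP => /forall_inP zH.
  by have := in_set0 z; rewrite -capH => /bigcapP; apply.
have card_isegD1 (y : 'I_n) : y < r.+1 -> #|iseg n r.+1 :\ y| = r.
  move=> lt_yr; have := cardsD1 y (iseg n r.+1).
  by rewrite inE lt_yr card_iseg // add1n => -[].
have isegDz : iseg n r.+1 :\ z \in H.
  refine (sH (card_isegD1 z _) (uH BH) _ BH) => //.
  apply: shift_le_dominates; first by rewrite card_isegD1 ?(uH BH).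
  rewrite setDE setIC; apply: dominates_setI_iseg.
    by apply/subsetP => y yB; rewrite !inE; apply: contraNneq zNB => <-.
  by rewrite setIC -setDE card_isegD1 ?(uH BH).
refine (sH (card_isegD1 x lt_xr) (card_isegD1 z _) _ isegDz) => //.
apply: shift_le_dominates; rewrite ?card_isegD1 //.
by apply: dominates_setD1; rewrite ?inE.
Qed.

Lemma two_le_card_cross_iseg (Y : {set 'I_n}) :
  (forall A, A \in H -> Y :&: A != set0) -> 2 <= #|Y :&: iseg n r.+1|.
Proof.
by move=> meetY; apply: two_le_card_setI_iseg => // x /shifted_iseg_setD1; apply: meetY.
Qed.

End NontrivialShifted.

Section FirstElems.
Variable n : nat.
Implicit Types (B C : {set 'I_n}) (m s : nat).

Definition first_elems C m : {set 'I_n} := [set x in C | #|C :&: iseg n x.+1| <= m].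

Lemma card_setI_first_elems C m s :
  #|first_elems C m :&: iseg n s| = minn m #|C :&: iseg n s|.
Proof.
elim: s => [|s IHs].
  have iseg0 X : X :&: iseg n 0 = set0 by apply/setP => x; rewrite !inE ltn0 andbF.
  by rewrite !iseg0 cards0 minn0.
have [lt_sn|le_ns] := ltnP s n; last by rewrite !iseg_ge ?setIT ?(leqW le_ns) in IHs *.
rewrite !card_setI_isegS IHs inE /= card_setI_isegS.
by case: (Ordinal lt_sn \in C) => /=; lia.
Qed.

Lemma card_first_elems C m : m <= #|C| -> #|first_elems C m| = m.
Proof.
move=> le_mC; have := card_setI_first_elems C m n.
by rewrite iseg_ge // !setIT => ->; apply/minn_idPl.
Qed.

Lemma first_elems_sub C m : first_elems C m \subset C.
Proof. by apply/subsetP => x; rewrite inE => /andP[]. Qed.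

Lemma dominates_first_elems C B m :
  dominates C B -> #|B| <= m -> dominates (first_elems C m) B.
Proof.
move=> domCB le_Bm s; rewrite card_setI_first_elems leq_min domCB andbT.
exact/(leq_trans _ le_Bm)/subset_leq_card/subsetIl.
Qed.

End FirstElems.

Section Flip.
Variable n : nat.
Implicit Types (B : {set 'I_n}) (k s t : nat).

Definition flip B t : {set 'I_n} := (B :\: iseg n t) :|: (iseg n t :\: B).

Lemma in_flip B t x : (x \in flip B t) = (x \in B) (+) (x < t).
Proof. by rewrite !inE; case: (x \in B); case: (x < t). Qed.

Lemma flip0 B : flip B 0 = B.
Proof. by apply/setP => x; rewrite in_flip ltn0 addbF. Qed.

Lemma flip_ge B t : n <= t -> flip B t = ~: B.
Proof.
by move=> le_nt; apply/setP => x; rewrite in_flip inE (leq_trans (ltn_ord x)) ?addbT.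
Qed.

Lemma card_flip_ge B t : n <= t -> #|flip B t| = n - #|B|.
Proof. by move/flip_ge->; rewrite cardsCs setCK card_ord. Qed.

Lemma card_flipS B t : #|flip B t.+1| <= #|flip B t|.+1.
Proof.
have sub : flip B t.+1 \subset flip B t :|: [set x : 'I_n | val x == t].
  apply/subsetP => x; rewrite in_setU !in_flip inE ltnS leq_eqVlt.
  by case: (val x == t); case: (x \in B); case: (x < t).
apply: (leq_trans (subset_leq_card sub)); rewrite -addn1.
apply: (leq_trans (leq_card_setU _ _)); rewrite leq_add2l.
by apply/card_le1_eqP => x y; rewrite !inE => /eqP ex /eqP ey; apply: val_inj; rewrite ex ey.
Qed.

Lemma flip_inj t : injective (flip ^~ t).
Proof.
move=> B1 B2 /setP eqB; apply/setP => x; move: (eqB x); rewrite !in_flip.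
by case: (x \in B1); case: (x \in B2); case: (x < t).
Qed.

Lemma card_flip_eq B1 B2 t1 t2 : t1 <= t2 -> #|B1| = #|B2| ->
  flip B1 t1 = flip B2 t2 -> #|flip B1 t2| = #|flip B1 t1|.
Proof.
move=> le_t12 eq_B12 /setP eqflip; apply/(@addIn #|B1|); rewrite [in RHS]eq_B12.
apply: eq_cards_add => x; move: (eqflip x); rewrite !in_flip.
have : (x < t1) ==> (x < t2) by apply/implyP => /leq_trans; apply.
by case: (x \in B1); case: (x \in B2); case: (x < t1); case: (x < t2).
Qed.

Lemma dominates_compl_flip B k t : #|flip B t| = k ->
  (forall s, t <= s -> k <= #|flip B s|) -> dominates (~: flip B t) B.
Proof.
move=> card_t flip_ge_k s; have [le_ts|lt_st] := leqP t s.
  have : #|B :&: iseg n s| + #|flip B s| = #|~: flip B t :&: iseg n s| + #|flip B t|.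
    apply: eq_cards_add => x; rewrite !in_setI !in_setC !in_flip !inE.
    have : (x < t) ==> (x < s) by apply/implyP => /leq_trans; apply.
    by case: (x \in B); case: (x < t); case: (x < s).
  by move: (flip_ge_k s le_ts); rewrite card_t; lia.
apply/subset_leq_card/subsetP => x; rewrite !in_setI !in_setC !in_flip !inE.
have : (x < s) ==> (x < t) by apply/implyP => /ltn_trans; apply.
by case: (x \in B); case: (x < t); case: (x < s).
Qed.

Lemma two_le_card_flip_setI_iseg B k l t :
  #|B| = l -> l <= k -> k < n -> #|flip B t| = k -> 2 <= #|B :&: iseg n k.+1| ->
  ~~ (B \subset iseg n l.+1) -> 2 <= #|flip B t :&: iseg n l.+1|.
Proof.
move=> card_B le_lk lt_kn card_flip two_B notsubB.
have card_l1 : #|iseg n l.+1| = l.+1 by rewrite card_iseg //; lia.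
have card_k1 : #|iseg n k.+1| = k.+1 by rewrite card_iseg.
have [le_tl1|lt_l1t] := leqP t l.+1.
  have : #|flip B t :&: iseg n l.+1| + #|B| = #|flip B t| + #|B :&: iseg n l.+1|.
    apply: eq_cards_add => x; rewrite !in_setI !in_flip !inE.
    have : (x < t) ==> (x < l.+1) by apply/implyP => /leq_trans; apply.
    by case: (x \in B); case: (x < t); case: (x < l.+1).
  have : #|B :&: iseg n k.+1| + #|iseg n l.+1| <= #|B :&: iseg n l.+1| + #|iseg n k.+1|.
    apply: leq_cards_add => x; rewrite !in_setI !inE.
    have : (x < l.+1) ==> (x < k.+1) by apply/implyP => /leq_trans; apply.
    by case: (x \in B); case: (x < k.+1); case: (x < l.+1).
  by rewrite card_l1 card_k1 card_B card_flip; lia.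
have : #|flip B t :&: iseg n l.+1| + #|B :&: iseg n l.+1|
       = #|iseg n l.+1| + #|set0 : {set 'I_n}|.
  apply: eq_cards_add => x; rewrite !in_setI !in_flip !inE.
  have : (x < l.+1) ==> (x < t) by apply/implyP => /ltn_trans; apply.
  by case: (x \in B); case: (x < t); case: (x < l.+1).
have : #|B :&: iseg n l.+1| < #|B|.
  rewrite ltn_neqAle subset_leq_card ?subsetIl // andbT.
  apply: contraNneq notsubB => eq_card.
  have /eqP <- : B :&: iseg n l.+1 == B by rewrite eqEcard subsetIl eq_card leqnn.
  exact: subsetIr.
by rewrite cards0 card_l1 card_B; lia.
Qed.

Definition last_flip k B := \max_(t < n.+1 | #|flip B t| == k) t.

Definition flip_last k B := flip B (last_flip k B).

Section LastFlip.
Variables (k : nat) (B : {set 'I_n}).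
Hypotheses (le_Bk : #|B| <= k) (le_k_compl : k <= n - #|B|).

Lemma last_flip_spec :
  [/\ last_flip k B <= n, #|flip_last k B| = k &
      forall s, s <= n -> #|flip B s| = k -> s <= last_flip k B].
Proof.
have [t0 /andP[_ le_t0n] card_t0] : exists2 t, 0 <= t <= n & #|flip B t| = k.
  by apply: nat_ivt; rewrite ?flip0 ?card_flip_ge //; apply: card_flipS.
have flip_k_gt0 : 0 < #|[pred t : 'I_n.+1 | #|flip B t| == k]|.
  by apply/card_gt0P; exists (Ordinal (le_t0n : t0 < n.+1)); rewrite inE /= card_t0.
have [t tk max_t] := eq_bigmax_cond (fun t : 'I_n.+1 => nat_of_ord t) flip_k_gt0.
rewrite /flip_last /last_flip max_t; split; first by rewrite -ltnS ltn_ord.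
  by move: tk; rewrite inE => /eqP.
move=> s le_sn card_s; rewrite -max_t.
by apply: (@leq_bigmax_cond _ _ _ (Ordinal (le_sn : s < n.+1))); rewrite inE /= card_s.
Qed.

Lemma card_flip_after_last s : last_flip k B <= s -> k <= #|flip B s|.
Proof.
have [_ _ last_max] := last_flip_spec.
move=> le_ts; have [le_sn|lt_ns] := leqP s n; last by rewrite card_flip_ge // ltnW.
rewrite leqNgt; apply/negP => lt_sk.
have le_k_flipn : k <= #|flip B n| by rewrite card_flip_ge.
have [s' /andP[le_ss' le_s'n] card_s'] :=
  nat_ivt (card_flipS B) le_sn (ltnW lt_sk) le_k_flipn.
have eq_s's : s' = s.
  by apply/eqP; rewrite eqn_leq le_ss' andbT (leq_trans (last_max s' le_s'n card_s')).
by move: lt_sk; rewrite -eq_s's card_s' ltnn.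
Qed.

Lemma exists_shift_le_disjoint_flip_last :
  exists B', [/\ #|B'| = #|B|, shift_le B' B & B' :&: flip_last k B = set0].
Proof.
have [_ card_flip _] := last_flip_spec.
set C := ~: flip_last k B.
have le_BC : #|B| <= #|C| by rewrite [#|C|]cardsCs setCK card_ord card_flip; lia.
have card_B' := card_first_elems le_BC.
exists (first_elems C #|B|); split => //.
  apply: shift_le_dominates => //; apply: dominates_first_elems => //.
  exact: dominates_compl_flip card_flip card_flip_after_last.
apply/eqP; rewrite setI_eq0 -[flip_last k B]setCK -subsets_disjoint.
exact: first_elems_sub.
Qed.

End LastFlip.

Lemma flip_last_inj k B1 B2 : #|B1| = #|B2| -> #|B1| <= k -> k <= n - #|B1| ->
  flip_last k B1 = flip_last k B2 -> B1 = B2.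
Proof.
move=> eq_B12 le_B1k le_k_compl.
have [le_t1n card1 max1] := last_flip_spec le_B1k le_k_compl.
rewrite eq_B12 in le_B1k le_k_compl.
have [le_t2n card2 max2] := last_flip_spec le_B1k le_k_compl.
rewrite /flip_last; case: (ltngtP (last_flip k B1) (last_flip k B2)) => [lt12|lt21|->].
- move=> eqflip; have := card_flip_eq (ltnW lt12) eq_B12 eqflip; rewrite card1.
  by move/(max1 _ le_t2n); rewrite leqNgt lt12.
- move=> eqflip; have := card_flip_eq (ltnW lt21) (esym eq_B12) (esym eqflip); rewrite card2.
  by move/(max2 _ le_t1n); rewrite leqNgt lt21.
- exact: flip_inj.
Qed.

End Flip.

Section Counting.
Variables (n k : nat).

Definition ksets_meet_iseg t i : {set {set 'I_n}} :=
  [set A : {set 'I_n} | (#|A| == k) && (#|A :&: iseg n t| == i)].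

Definition ksets_meet2_iseg t : {set {set 'I_n}} :=
  [set A : {set 'I_n} | (#|A| == k) && (2 <= #|A :&: iseg n t|)].

Lemma card_ksets_meet_iseg t i : t <= n ->
  #|ksets_meet_iseg t i| <= 'C(t, i) * binom_diff (n - t) k i.
Proof.
move=> le_tn; set T := iseg n t; have card_T : #|T| = t by rewrite card_iseg.
rewrite /binom_diff; case: (leqP i k) => [le_ik|lt_ki]; last first.
  rewrite muln0 leqn0 cards_eq0; apply/eqP/setP => A; rewrite !inE.
  apply/negP => /andP[/eqP card_A /eqP card_AT].
  by move: (subset_leq_card (subsetIl A T)); rewrite card_A card_AT leqNgt lt_ki.
pose split_T (A : {set 'I_n}) := (A :&: T, A :\: T).
have split_inj : injective split_T.
  move=> A1 A2 [eqT eqNT]; apply/setP => x.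
  move/setP: eqT => /(_ x); move/setP: eqNT => /(_ x); rewrite !in_setI !in_setD.
  by case: (x \in T); case: (x \in A1); case: (x \in A2).
rewrite -(card_imset _ split_inj).
have -> : 'C(t, i) * 'C(n - t, k - i) =
    #|setX [set S : {set 'I_n} | S \subset T & #|S| == i]
          [set R : {set 'I_n} | R \subset ~: T & #|R| == k - i]|.
  by rewrite cardsX !cards_draws card_T cardsCs setCK card_ord card_T.
apply/subset_leq_card/subsetP => p /imsetP[A].
rewrite inE => /andP[/eqP card_A /eqP card_AT] ->.
rewrite !inE /= card_AT eqxx subsetIr subDset setUCr subsetT /=.
by have := cardsID T A; rewrite card_A card_AT => <-; rewrite addKn.
Qed.

Lemma card_ksets_meet2_iseg t : t <= n ->
  #|ksets_meet2_iseg t| <= \sum_(2 <= i < t.+1) 'C(t, i) * binom_diff (n - t) k i.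
Proof.
move=> le_tn; apply: (@leq_trans (\sum_(2 <= i < t.+1) #|ksets_meet_iseg t i|)); last first.
  by apply: leq_sum => i _; apply: card_ksets_meet_iseg.
rewrite -sum1_card.
rewrite (eq_bigr (fun A => \sum_(2 <= i < t.+1) (i == #|A :&: iseg n t| : nat))); last first.
  move=> A; rewrite inE => /andP[_ two_A].
  rewrite (eq_bigr (fun i => if i == #|A :&: iseg n t| then 1 else 0)) => [|i _]; last first.
    by case: eqP.
  rewrite -big_mkcond big_nat1_eq two_A ltnS /=.
  by rewrite -{2}(card_iseg le_tn) subset_leq_card ?subsetIr.
rewrite exchange_big /=; apply: leq_sum => i _.
rewrite card_sum_mem big_mkcond /=; apply: leq_sum => A _.
by rewrite !inE; case: ifP => // /andP[-> _]; rewrite eq_sym.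
Qed.

End Counting.

Lemma card_uniform_sub_iseg n r t (H : {set {set 'I_n}}) : t <= n -> uniform r H ->
  #|H :&: [set B : {set 'I_n} | B \subset iseg n t]| <= 'C(t, r).
Proof.
move=> le_tn uH; rewrite -[X in 'C(X, _)](card_iseg le_tn) -cards_draws.
apply/subset_leq_card/subsetP => B; rewrite !inE => /andP[BH ->].
by rewrite (uH B BH) eqxx.
Qed.

Section CrossIntersecting.
Variables (n k l : nat) (F G : {set {set 'I_n}}).
Hypotheses (le_lk : l <= k) (le_kln : k + l <= n) (uG : uniform l G) (sG : shifted l G).
Hypothesis crossFG : cross_intersecting F G.

Lemma flip_last_notin B : B \in G -> flip_last k B \notin F.
Proof.
move=> BG; have card_B := uG BG.
have le_Bk : #|B| <= k by rewrite card_B.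
have le_k_compl : k <= n - #|B| by rewrite card_B; lia.
have [B' [card_B' leB'B disjB']] := exists_shift_le_disjoint_flip_last le_Bk le_k_compl.
rewrite card_B in card_B'.
apply/negP => /crossFG /(_ (sG card_B' card_B leB'B BG)).
by rewrite setIC disjB' eqxx.
Qed.

Lemma leq_card_not_sub_iseg :
  k < n -> (forall B, B \in G -> 2 <= #|B :&: iseg n k.+1|) ->
  #|G :\: [set B : {set 'I_n} | B \subset iseg n l.+1]|
    <= #|ksets_meet2_iseg n k l.+1 :\: F|.
Proof.
move=> lt_kn two_G.
have flip_inj :
    {in G :\: [set B : {set 'I_n} | B \subset iseg n l.+1] &, injective (flip_last k)}.
  move=> B1 B2; rewrite !inE => /andP[_ /uG card_B1] /andP[_ /uG card_B2].
  by apply: flip_last_inj; rewrite ?card_B1 ?card_B2 //; lia.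
rewrite -(card_in_imset flip_inj); apply/subset_leq_card/subsetP => A /imsetP[B].
rewrite !inE => /andP[notsubB BG] ->; have card_B := uG BG.
have le_Bk : #|B| <= k by rewrite card_B.
have le_k_compl : k <= n - #|B| by rewrite card_B; lia.
have [_ card_flip _] := last_flip_spec le_Bk le_k_compl.
rewrite flip_last_notin //= card_flip eqxx /=.
exact: two_le_card_flip_setI_iseg card_B le_lk lt_kn card_flip (two_G B BG) notsubB.
Qed.

End CrossIntersecting.

Theorem theorem3p3 (n k l : nat) (F G : {set {set 'I_n}}) :
  2 <= l -> l <= k -> k + l <= n ->
  uniform k F -> uniform l G ->
  non_trivial F -> non_trivial G ->
  shifted k F -> shifted l G ->
  cross_intersecting F G ->
  #|F| + #|G| <= g n k l.
Proof.
move=> le2l le_lk le_kln uF uG ntF ntG sF sG crossFG.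
have lt_ln : l < n by lia.
have lt_kn : k < n by lia.
set M2 := ksets_meet2_iseg n k l.+1.
have sub_FM2 : F \subset M2.
  apply/subsetP => A AF; rewrite inE (uF A AF) eqxx /=.
  by apply: (two_le_card_cross_iseg lt_ln uG ntG sG) => B BG; apply: crossFG.
have two_G B : B \in G -> 2 <= #|B :&: iseg n k.+1|.
  move=> BG; apply: (two_le_card_cross_iseg lt_kn uF ntF sF) => A AF.
  by rewrite setIC; apply: crossFG.
have card_Gsub := card_uniform_sub_iseg lt_ln uG.
have card_Gnotsub := leq_card_not_sub_iseg le_lk le_kln uG sG crossFG lt_kn two_G.
have card_M2 := card_ksets_meet2_iseg k lt_ln.
rewrite -/M2 in card_Gnotsub card_M2; rewrite subnS -subn1 in card_M2.
rewrite /g -(cardsID [set B : {set 'I_n} | B \subset iseg n l.+1] G) -(setIidPr sub_FM2).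
apply: (leq_trans _ (leq_add card_M2 (leqnn _))).
by rewrite -(cardsID F M2) -addnA leq_add2l addnC leq_add.
Qed.
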